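(* Let $\mathbb{K}$ be a field of characteristic $2$, let $(A,L,\theta)$ be a restricted Lie–Rinehart algebra, let $(M,\rho)$ be a restricted Lie–Rinehart module and let $(\varphi,\omega)\in C^n_{\rm LR}(L;M)$. Then $\mathrm{d}^n_{\rm LR}(\varphi,\omega)\in C^{n+1}_{\rm LR}(L;M)$. Furthermore, $\mathrm{d}^{n+1}_{\rm LR}\circ\mathrm{d}^n_{\rm LR}=0$.
   Context: $\mathbb{K}$ has characteristic $2$. Restricted Lie algebra: Lie algebra with $x\mapsto x^{[2]}$, $(\lambda x)^{[2]}=\lambda^2x^{[2]}$, $\mathrm{ad}_{x^{[2]}}=\mathrm{ad}_x^2$, $(x+y)^{[2]}=x^{[2]}+y^{[2]}+[x,y]$. Restricted Lie–Rinehart algebra $(A,L,\theta)$: $A$ commutative associative, $L$ restricted Lie algebra and $A$-module, $\theta:L\to\mathrm{Der}(A)$ an $A$-linear restricted Lie morphism ($\mathrm{Der}(A)$ with commutator, $D^{[2]}=D^2$) with $[x,ay]=a[x,y]+\theta(x)(a)y$, $(ax)^{[2]}=a^2x^{[2]}+\theta(ax)(a)x$. Restricted Lie–Rinehart module: $A$-module $M$ with restricted Lie morphism $\rho:L\to\mathrm{End}(M)$ (so $\rho(x^{[2]})=\rho(x)^2$) and $\rho(x)(am)=a\rho(x)(m)+\theta(x)(a)m$. Write $x\cdot m=\rho(x)(m)$. $C^0_{\rm LR}(L;M)=M$, $C^1_{\rm LR}(L;M)=\mathrm{Hom}_A(L,M)$; for $n\ge2$, $C^n_{\rm LR}(L;M)$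 consists of pairs $(\varphi,\omega)$ with $\varphi:L^n\to M$ alternating and $A$-multilinear, $\omega:L\times L^{n-2}\to M$ alternating and $\mathbb{K}$-multilinear in the last $n-2$ arguments, such that for $z=(z_2,..,z_{n-1})$: $\omega(\lambda x,z)=\lambda^2\omega(x,z)$ ($\lambda\in\mathbb{K}$), $\omega(x+y,z)=\omega(x,z)+\omega(y,z)+\varphi(x,y,z)$, $\omega(ax,z)=a^2\omega(x,z)$ and $\omega(x,z_2,..,az_i,..)=a\,\omega(x,z_2,..,z_i,..)$ ($a\in A$). Differentials: $\mathrm{d}^0(m)(x)=x\cdot m$; $\mathrm{d}^1\psi=(\mathrm{d}_{\rm CE}\psi,\delta^1\psi)$, $\delta^1\psi(x)=\psi(x^{[2]})+x\cdot\psi(x)$; for $n\ge2$ $\mathrm{d}^n(\varphi,\omega)=(\mathrm{d}_{\rm CE}\varphi,\delta^n\omega)$ with $\mathrm{d}_{\rm CE}\varphi(x_1,..,x_{n+1})=\sum_{i<j}\varphi([x_i,x_j],x_1,..,\hat x_i,..,\hat x_j,..)+\sum_ix_i\cdot\varphi(x_1,..,\hat x_i,..)$ and $\delta^n\omega(x,z_2,..,z_n)=x\cdot\varphi(x,z_2,..,z_n)+\sum_{i=2}^nz_i\cdot\omega(x,..,\hat z_i,..)+\varphi(x^{[2]},z_2,..,z_n)+\sum_{i=2}^n\varphi([x,z_i],x,z_2,..,\hat z_i,..,z_n)+\sum_{2\le i<j\le n}\omega(x,[z_i,z_j],z_2,..,\hat z_i,..,\hat z_j,..,z_n)$. *)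

From HB Require Import structures.
From mathcomp Require Import all_boot all_order all_algebra.
From mathcomp Require Import zify.

Set Implicit Arguments.
Unset Strict Implicit.
Unset Printing Implicit Defensive.

Import Order.TTheory GRing.Theory.
Local Open Scope ring_scope.

Lemma delp_proof (m i : nat) (k : 'I_m.-1) : (bump i k < m)%N.
Proof. have := ltn_ord k; rewrite /bump; case: (i <= k)%N => /=; lia. Qed.

Definition delp {X : Type} {m : nat} (i : nat) (x : 'I_m -> X) : 'I_m.-1 -> X :=
  fun k => x (Ordinal (delp_proof i k)).

Lemma vcons_proof (m k : nat) : (k.+1 < m)%N -> (k < m.-1)%N.
Proof. lia. Qed.

Definition vcons {X : Type} {m : nat} (y : X) (z : 'I_m.-1 -> X) : 'I_m -> X :=
  fun k => match nat_of_ord k as v return (v < m)%N -> X with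
           | 0 => fun _ => y
           | k'.+1 => fun h => z (Ordinal (vcons_proof h))
           end (ltn_ord k).

Definition upd {X : Type} {m : nat} (x : 'I_m -> X) (i : 'I_m) (y : X) : 'I_m -> X :=
  fun j => if j == i then y else x j.

Section RLR.
Variables (K : fieldType) (A : comAlgType K) (L M : lmodType A).

(* The K-vector space structures of L and M are induced by A: k . x := k%:A *: x. *)

Definition is_rLR_algebra (br : L -> L -> L) (sq : L -> L) (th : L -> A -> A) : Prop :=
  (forall x y z, br (x + y) z = br x z + br y z) /\
  (forall x y z, br x (y + z) = br x y + br x z) /\
  (forall (k : K) x y, br (k%:A *: x) y = k%:A *: br x y) /\
  (forall (k : K) x y, br x (k%:A *: y) = k%:A *: br x y) /\
  (forall x, br x x = 0) /\
  (forall x y z, br x (br y z) + br y (br z x) + br z (br x y) = 0) /\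
  (forall (k : K) x, sq (k%:A *: x) = (k ^+ 2)%:A *: sq x) /\
  (forall x y, br (sq x) y = br x (br x y)) /\
  (forall x y, sq (x + y) = sq x + sq y + br x y) /\
  (forall x a b, th x (a + b) = th x a + th x b) /\
  (forall x (k : K) a, th x (k *: a) = k *: th x a) /\
  (forall x a b, th x (a * b) = a * th x b + th x a * b) /\
  (forall (a : A) x y c, th (a *: x + y) c = a * th x c + th y c) /\
  (forall x y c, th (br x y) c = th x (th y c) - th y (th x c)) /\
  (forall x c, th (sq x) c = th x (th x c)) /\
  (forall x (a : A) y, br x (a *: y) = a *: br x y + th x a *: y) /\
  (forall (a : A) x, sq (a *: x) = (a ^+ 2) *: sq x + th (a *: x) a *: x).

Definition is_rLR_module (br : L -> L -> L) (sq : L -> L) (th : L -> A -> A)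
  (rho : L -> M -> M) : Prop :=
  (forall x m m', rho x (m + m') = rho x m + rho x m') /\
  (forall x (k : K) m, rho x (k%:A *: m) = k%:A *: rho x m) /\
  (forall (a : A) x y m, rho (a *: x + y) m = a *: rho x m + rho y m) /\
  (forall x y m, rho (br x y) m = rho x (rho y m) - rho y (rho x m)) /\
  (forall x m, rho (sq x) m = rho x (rho x m)) /\
  (forall x (a : A) m, rho x (a *: m) = a *: rho x m + th x a *: m).

(* Alternating maps (characteristic 2: vanish when two arguments coincide). *)
Definition alternating {m : nat} (f : ('I_m -> L) -> M) : Prop :=
  forall (x : 'I_m -> L) (i j : 'I_m), i != j -> x i = x j -> f x = 0.

Definition multiadditive {m : nat} (f : ('I_m -> L) -> M) : Prop :=
  forall (x : 'I_m -> L) (i : 'I_m) (y y' : L),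
    f (upd x i (y + y')) = f (upd x i y) + f (upd x i y').

Definition A_multilinear {m : nat} (f : ('I_m -> L) -> M) : Prop :=
  multiadditive f /\
  forall (x : 'I_m -> L) (i : 'I_m) (a : A) (y : L),
    f (upd x i (a *: y)) = a *: f (upd x i y).

Definition K_multilinear {m : nat} (f : ('I_m -> L) -> M) : Prop :=
  multiadditive f /\
  forall (x : 'I_m -> L) (i : 'I_m) (k : K) (y : L),
    f (upd x i (k%:A *: y)) = k%:A *: f (upd x i y).

(* C^{n+2}_LR(L;M): pairs (phi, om) with phi : L^{n+2} -> M and
   om : L x L^n -> M satisfying the conditions of the paper. *)
Definition is_cochain (n : nat) (phi : ('I_n.+2 -> L) -> M)
  (om : L -> ('I_n -> L) -> M) : Prop :=
  alternating phi /\ A_multilinear phi /\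
  (forall x, alternating (om x)) /\ (forall x, K_multilinear (om x)) /\
  (forall (k : K) x z, om (k%:A *: x) z = (k ^+ 2)%:A *: om x z) /\
  (forall x y z, om (x + y) z = om x z + om y z + phi (vcons (m := n.+2) x (vcons (m := n.+1) y z))) /\
  (forall (a : A) x z, om (a *: x) z = (a ^+ 2) *: om x z) /\
  (forall x z (i : 'I_n) (a : A), om x (upd z i (a *: z i)) = a *: om x z).

(* Chevalley-Eilenberg differential (signs are irrelevant in char 2):
   d phi (x_1..x_{m+2}) = sum_{i<j} phi([x_i,x_j], x_1,..^i..^j..)
                          + sum_i x_i . phi(x_1,..^i..). *)
Definition dCE (br : L -> L -> L) (rho : L -> M -> M) (m : nat)
  (phi : ('I_m.+1 -> L) -> M) : ('I_m.+2 -> L) -> M :=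
  fun x =>
    \sum_(j < m.+2) \sum_(i < m.+1 | (i < j)%N)
        phi (vcons (m := m.+1) (br (x (widen_ord (leqnSn _) i)) (x j))
               (delp i (delp j x)))
    + \sum_(i < m.+2) rho (x i) (phi (delp i x)).

Definition delta (br : L -> L -> L) (sq : L -> L) (rho : L -> M -> M) (n : nat)
  (phi : ('I_n.+2 -> L) -> M) (om : L -> ('I_n -> L) -> M)
  : L -> ('I_n.+1 -> L) -> M :=
  fun x z =>
    rho x (phi (vcons (m := n.+2) x z))
    + \sum_(i < n.+1) rho (z i) (om x (delp i z))
    + phi (vcons (m := n.+2) (sq x) z)
    + \sum_(i < n.+1) phi (vcons (m := n.+2) (br x (z i)) (vcons (m := n.+1) x (delp i z)))
    + \sum_(j < n.+1) \sum_(i < n.+1 | (i < j)%N)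
        om x (vcons (m := n) (br (z i) (z j)) (delp i (delp j z))).

End RLR.

(* In characteristic 2 alternating multilinear maps are symmetric, so cochains can
   be transported from families ['I_m -> L] to lists of arguments, which may be
   permuted freely and carry no signs. On lists the Chevalley-Eilenberg
   differential obeys d f (x :: t) = L_x f t + d (f (x :: _)) t, where
   L_x f t = x.f(t) + sum_k f(t[k := [x, t_k]]) is the Lie derivative. The bracket
   identities [L_x, L_y] = L_[x,y] and L_x L_x = L_(x^[2]) give L_x d = d L_x,
   hence d d = 0 by induction on the list. The second component of the
   differential is Delta_x (f, g) t = L_x f(x :: _) t + f(x^[2] :: t) + d g t, and
   Delta_x (d f, Delta_x (f, g)) = 0 follows from the same identities. Finally
   L_x, d and Delta_x preserve alternating A-multilinear maps, and Delta_x is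
   additive and quadratically A-homogeneous in x up to the terms demanded of the
   omega-component; this is where the axioms for (x + y)^[2] and (a x)^[2] enter. *)

From HB Require Import structures.
From Stdlib Require Import FunctionalExtensionality.
From mathcomp Require Import all_boot all_algebra.
From mathcomp Require Import zify ssrAC.

Set Implicit Arguments.
Unset Strict Implicit.
Unset Printing Implicit Defensive.

Import GRing.Theory.
Local Open Scope ring_scope.

Lemma idem_addr_eq0 (V : zmodType) (u : V) : u = u + u -> u = 0.
Proof. by move=> h; apply: (addrI u); rewrite addr0 -h. Qed.

Lemma big_nat_ord_lt (V : zmodType) j n (F : nat -> V) : (j <= n)%N ->
  \sum_(0 <= p < j) F p = \sum_(p < n | (p < j)%N) F p.
Proof. by move=> jn; rewrite (big_nat_widen _ _ _ _ _ jn) big_mkord. Qed.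

Section Char2Module.
Variables (R : nzRingType) (V : lmodType R).
Hypothesis pcharR2 : 2%N \in [pchar R].

Lemma addvv_pchar2 (v : V) : v + v = 0.
Proof. by rewrite -mulr2n -scaler_nat (pcharf0 pcharR2) scale0r. Qed.

Lemma oppv_pchar2 (v : V) : - v = v.
Proof. by apply/esym/eqP; rewrite -addr_eq0 addvv_pchar2. Qed.

Lemma addv_eq0_pchar2 (u v : V) : u + v = 0 -> u = v.
Proof. by move/eqP; rewrite addr_eq0 oppv_pchar2 => /eqP. Qed.

(* In characteristic 2 the off-diagonal terms cancel in pairs. *)
Lemma sum_sym_diag n (F : nat -> nat -> V) :
  (forall k l, (k < n)%N -> (l < n)%N -> F k l = F l k) ->
  \sum_(k < n) \sum_(l < n) F k l = \sum_(k < n) F k k.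
Proof.
move=> Fs.
have E (k : 'I_n) : \sum_(l < n) F k l = F k k +
   (\sum_(l < n) (if (l < k)%N then F k l else 0) +
    \sum_(l < n) (if (k < l)%N then F k l else 0)).
  rewrite -big_split /= [LHS](bigD1 k) //= [in RHS](bigD1 k) //= ltnn !add0r.
  congr (_ + _); apply: eq_bigr => l /= lk; case: ltngtP => //.
  - by rewrite addr0.
  - by rewrite add0r.
  - by move=> e; move: lk; rewrite -(inj_eq val_inj) /= e eqxx.
rewrite (eq_bigr _ (fun k _ => E k)) big_split /= big_split /=.
suff -> : \sum_(k < n) \sum_(l < n) (if (k < l)%N then F k l else 0) =
          \sum_(k < n) \sum_(l < n) (if (l < k)%N then F k l else 0).
  by rewrite addvv_pchar2 addr0.
rewrite exchange_big /=; apply: eq_bigr => k _; apply: eq_bigr => l _.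
by case: ifP => // _; rewrite Fs.
Qed.

Lemma sum_transpose_diag n (F G : nat -> nat -> V) :
  (forall k l, (k < n)%N -> (l < n)%N -> k != l -> F k l = G l k) ->
  \sum_(k < n) \sum_(l < n) F k l + \sum_(k < n) \sum_(l < n) G k l =
  \sum_(k < n) (F k k + G k k).
Proof.
move=> FG.
rewrite [X in _ + X]exchange_big /= -big_split /=; apply: eq_bigr => k _.
rewrite -big_split /= (bigD1 k) //= big1 ?addr0 // => l lk.
by rewrite FG // ?addvv_pchar2 // eq_sym.
Qed.

End Char2Module.

Definition fam {V : zmodType} m (s : seq V) : 'I_m -> V := fun k => s`_k.
Arguments fam {V} m s _.

Definition on_seq {V : zmodType} {W : Type} m (F : ('I_m -> V) -> W) (s : seq V) : W :=
  F (fam m s).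

Definition seq_of {V : zmodType} m (x : 'I_m -> V) : seq V := map x (enum 'I_m).

Section ListsAndFamilies.
Variable V : zmodType.
Implicit Types (s t u : seq V) (a b y : V).

Definition drop_at i s := take i s ++ drop i.+1 s.

Lemma drop_at0 a t : drop_at 0 (a :: t) = t.
Proof. by rewrite /drop_at /= drop0. Qed.

Lemma drop_atS i a t : drop_at i.+1 (a :: t) = a :: drop_at i t.
Proof. by []. Qed.

Lemma size_drop_at t q : (q < size t)%N -> size (drop_at q t) = (size t).-1.
Proof. by move=> h; rewrite /drop_at size_cat size_take h size_drop; lia. Qed.

Lemma nth_drop_at s i k : (drop_at i s)`_k = s`_(bump i k).
Proof.
rewrite /drop_at nth_cat size_take /bump.
case: (ltnP i (size s)) => his.
  case: (ltnP k i) => ki; first by rewrite add0n nth_take.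
  by rewrite nth_drop add1n; congr nth; lia.
case: (ltnP k (size s)) => ks.
  have -> : (i <= k)%N = false by apply/negbTE; rewrite -ltnNge (leq_trans ks).
  by rewrite add0n nth_take // (leq_trans ks his).
have hb : (size s <= (i <= k)%N + k)%N by case: (i <= k)%N; lia.
rewrite !nth_default // size_drop.
by have /eqP -> : (size s - i.+1 == 0)%N by rewrite subn_eq0 leqW.
Qed.

Lemma size_set_nth_lt s k y : (k < size s)%N -> size (set_nth 0 s k y) = size s.
Proof. by move=> h; rewrite size_set_nth; apply/maxn_idPr. Qed.

Lemma nth_set_nth_eq s k y : (set_nth 0 s k y)`_k = y.
Proof. by rewrite nth_set_nth /= eqxx. Qed.

Lemma nth_set_nth_neq s k l y : l != k -> (set_nth 0 s k y)`_l = s`_l.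
Proof. by rewrite nth_set_nth /= => /negbTE ->. Qed.

Lemma set_set_nth_eq s k y y' : set_nth 0 (set_nth 0 s k y) k y' = set_nth 0 s k y'.
Proof. by rewrite set_set_nth eqxx. Qed.

Lemma set_set_nth_neq s k l y y' : k != l ->
  set_nth 0 (set_nth 0 s k y) l y' = set_nth 0 (set_nth 0 s l y') k y.
Proof. by rewrite set_set_nth => /negbTE ->. Qed.

Lemma set_nth_nth t q : (q < size t)%N -> set_nth 0 t q t`_q = t.
Proof. by elim: t q => [//|a t IH] [|q] //= h; rewrite IH. Qed.

Lemma perm_swap_head a b t : perm_eq (a :: b :: t) (b :: a :: t).
Proof. by rewrite -[a :: b :: t]/([:: a] ++ [:: b] ++ t) perm_catCA. Qed.

Lemma perm_set_nth t q y : (q < size t)%N ->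
  perm_eq (set_nth 0 t q y) (y :: drop_at q t).
Proof.
elim: t q => [//|a t IH] [|q] /= h; first by rewrite drop_at0.
by rewrite drop_atS; apply: perm_trans (perm_swap_head _ _ _); rewrite perm_cons IH.
Qed.

Lemma perm_drop_at t q : (q < size t)%N -> perm_eq t (t`_q :: drop_at q t).
Proof. by move=> h; rewrite -{1}(set_nth_nth h) perm_set_nth. Qed.

Definition swap_at i s := set_nth 0 (set_nth 0 s i s`_i.+1) i.+1 s`_i.

Lemma perm_swap_at i s : (i.+1 < size s)%N -> perm_eq (swap_at i s) s.
Proof.
elim: s i => [//|a s IH] [|i] /=.
  by case: s IH => [//|b s] _ _; apply: perm_swap_head.
by move=> h; rewrite /swap_at /= perm_cons; apply: IH.
Qed.

Lemma size_seq_of m (x : 'I_m -> V) : size (seq_of x) = m.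
Proof. by rewrite size_map size_enum_ord. Qed.

Lemma nth_seq_of m (x : 'I_m -> V) (k : 'I_m) : (seq_of x)`_k = x k.
Proof. by rewrite (nth_map k) ?size_enum_ord // nth_ord_enum. Qed.

Lemma fam_seq_of m (x : 'I_m -> V) : fam m (seq_of x) = x.
Proof. by apply: functional_extensionality => k; rewrite /fam nth_seq_of. Qed.

Lemma seq_of_fam m s : size s = m -> seq_of (fam m s) = s.
Proof.
move=> sm; apply: (@eq_from_nth _ 0); first by rewrite size_seq_of.
by move=> i; rewrite size_seq_of => im; rewrite (nth_seq_of _ (Ordinal im)).
Qed.

Lemma delp_fam m i s : delp i (fam m s) = fam m.-1 (drop_at i s).
Proof. by apply: functional_extensionality => k; rewrite /fam nth_drop_at. Qed.

Lemma vcons_fam m y s : vcons (m := m) y (fam m.-1 s) = fam m (y :: s).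
Proof. by apply: functional_extensionality => -[[|k] hk]. Qed.

Lemma seq_of_vcons m y (w : 'I_m -> V) : seq_of (vcons (m := m.+1) y w) = y :: seq_of w.
Proof.
move: (seq_of w) (size_seq_of w) (fam_seq_of w) => s ss <-.
by rewrite vcons_fam seq_of_fam //= ss.
Qed.

Lemma upd_fam m s (i : 'I_m) y : upd (fam m s) i y = fam m (set_nth 0 s i y).
Proof.
apply: functional_extensionality => j; rewrite /upd /fam nth_set_nth /=.
by rewrite -(inj_eq val_inj).
Qed.

Lemma fam_set_nth m s i (im : (i < m)%N) y :
  fam m (set_nth 0 s i y) = upd (fam m s) (Ordinal im) y.
Proof. by rewrite upd_fam. Qed.

Lemma seq_of_upd m (x : 'I_m -> V) i y : seq_of (upd x i y) = set_nth 0 (seq_of x) i y.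
Proof.
by rewrite -{1}(fam_seq_of x) upd_fam seq_of_fam // size_set_nth_lt size_seq_of.
Qed.

Lemma upd_id m (x : 'I_m -> V) i : upd x i (x i) = x.
Proof. by apply: functional_extensionality => j; rewrite /upd; case: eqP => // ->. Qed.

Lemma upd_comm m (x : 'I_m -> V) i j y y' : i != j ->
  upd (upd x i y) j y' = upd (upd x j y') i y.
Proof.
move=> ij; apply: functional_extensionality => l; rewrite /upd.
by case: (eqVneq l j) => [->|//]; rewrite eq_sym (negbTE ij).
Qed.

End ListsAndFamilies.

Section SeqForms.
Variables (R : nzRingType) (V W : lmodType R).
Implicit Types (f g : seq V -> W) (s t u : seq V) (a b c x y : V).

(* Properties of [f] on lists of length [k]; [alt] only tests the first two
   arguments, full alternation then follows from [sym] ([alt_eq_args]). *)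
Definition sym k f := forall s t, size s = k -> perm_eq s t -> f s = f t.

Definition multiadd k f := forall u i x y, size u = k -> (i < k)%N ->
  f (set_nth 0 u i (x + y)) = f (set_nth 0 u i x) + f (set_nth 0 u i y).

Definition alt k f := forall a s, (size s).+2 = k -> f (a :: a :: s) = 0.

Definition homog k f := forall u i (r : R), size u = k -> (i < k)%N ->
  f (set_nth 0 u i (r *: u`_i)) = r *: f u.

Definition altform k f := [/\ sym k f, multiadd k f, alt k f & homog k f].

Lemma sym0 f : sym 0 f.
Proof. by move=> [|] // t _ /perm_size/esym/size0nil ->. Qed.

Lemma sym_ext k f g : f =1 g -> sym k g -> sym k f.
Proof. by move=> e h s t ss pst; rewrite !e; apply: h. Qed.

Lemma sym_ext_size k f g : (forall s, size s = k -> f s = g s) -> sym k g -> sym k f.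
Proof. by move=> e h s t ss pst; rewrite !e -?(perm_size pst) //; apply: h. Qed.

Lemma symD k f g : sym k f -> sym k g -> sym k (fun s => f s + g s).
Proof. by move=> hf hg s t ss pst; rewrite (hf s t) // (hg s t). Qed.

Lemma sym_cons k f a : sym k.+1 f -> sym k (fun s => f (a :: s)).
Proof. by move=> h s t ss pst; apply: h; rewrite /= ?ss ?perm_cons. Qed.

Lemma sym_consP k f a : sym k f -> sym k.-1 (fun s => f (a :: s)).
Proof. by case: k => [|k] h; [apply: sym0 | apply: sym_cons]. Qed.

Lemma sym_swap_head k f a b s : sym k f -> (size s).+2 = k ->
  f (a :: b :: s) = f (b :: a :: s).
Proof. by move=> h ss; apply: h => //; apply: perm_swap_head. Qed.

Lemma sym_set_nth k f u i y : sym k f -> size u = k -> (i < k)%N ->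
  f (set_nth 0 u i y) = f (y :: drop_at i u).
Proof.
move=> h su ik; apply: h; last by apply: perm_set_nth; rewrite su.
by rewrite size_set_nth_lt // su.
Qed.

Lemma move_front t1 a t2 f :
  (forall s i, size s = size (t1 ++ a :: t2) -> (i.+1 < size s)%N ->
     f (swap_at i s) = f s) ->
  f (t1 ++ a :: t2) = f (a :: t1 ++ t2).
Proof.
elim: t1 f => [//|b t1 IH] f h /=.
rewrite (IH (fun s => f (b :: s))); last first.
  by move=> s i ss si; apply: (h (b :: s) i.+1) => //=; rewrite ss.
have := h (a :: b :: t1 ++ t2) 0%N; rewrite /swap_at /= => -> //.
by rewrite size_cat /= size_cat /= addnS.
Qed.

Lemma sym_adjacent k f :
  (forall s i, size s = k -> (i.+1 < k)%N -> f (swap_at i s) = f s) -> sym k f.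
Proof.
elim: k f => [|k IH] f h; first exact: sym0.
move=> [//|a s] t /= [ss] pst.
have ha : a \in t by rewrite -(perm_mem pst) mem_head.
move: pst; case/splitPr: ha => t1 t2 pst.
have st : size (t1 ++ a :: t2) = k.+1 by rewrite -(perm_size pst) /= ss.
rewrite move_front; last first.
  by move=> s' i ss' si; apply: h; [rewrite ss' st | rewrite -st -ss'].
have ps : perm_eq s (t1 ++ t2).
  rewrite -(perm_cons a); apply: perm_trans pst _.
  by rewrite -[t1 ++ a :: t2]/(t1 ++ [:: a] ++ t2) perm_catCA.
apply: (IH (fun s => f (a :: s))) => //.
by move=> s' i ss' si; apply: (h (a :: s') i.+1) => //=; rewrite ss'.
Qed.

Lemma sym_head k f :
  (forall a b s, (size s).+2 = k -> f (a :: b :: s) = f (b :: a :: s)) ->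
  (forall a, sym k.-1 (fun s => f (a :: s))) -> sym k f.
Proof.
move=> h1 h2; apply: sym_adjacent => -[|a s] i ss ik; first by rewrite -ss in ik.
case: i ik => [|i] ik.
  case: s ss ik => [|b s] /= ss ik; first by move: ik; rewrite -ss.
  by rewrite /swap_at /= (h1 b a s).
have hs : size s = k.-1 by rewrite -ss.
have ps : perm_eq s (swap_at i s).
  by rewrite perm_sym perm_swap_at // -ltnS -[(size s).+1]/(size (a :: s)) ss.
by have /= -> := h2 a s _ hs ps.
Qed.

Lemma multiadd_cons k f a : multiadd k.+1 f -> multiadd k (fun s => f (a :: s)).
Proof. by move=> h u i x y su ik; apply: (h (a :: u) i.+1) => //=; rewrite su. Qed.

Lemma multiadd_consP k f a : multiadd k f -> multiadd k.-1 (fun s => f (a :: s)).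
Proof. by case: k => [|k] h //; apply: multiadd_cons. Qed.

Lemma multiadd_head k f x y s : multiadd k f -> (size s).+1 = k ->
  f ((x + y) :: s) = f (x :: s) + f (y :: s).
Proof. by move=> h ss; apply: (h (x :: s) 0%N) => //; rewrite -ss. Qed.

Lemma multiadd_head0 k f s : multiadd k f -> (size s).+1 = k -> f (0 :: s) = 0.
Proof. by move=> h ss; apply: idem_addr_eq0; rewrite -(multiadd_head _ _ h ss) addr0. Qed.

Lemma multiadd_of_head k f : sym k f ->
  (forall x y s, (size s).+1 = k -> f ((x + y) :: s) = f (x :: s) + f (y :: s)) ->
  multiadd k f.
Proof.
move=> hs h u i x y su ik; rewrite !(sym_set_nth _ hs su ik) h //.
by rewrite size_drop_at su //; lia.
Qed.

Lemma homog_cons k f a : homog k.+1 f -> homog k (fun s => f (a :: s)).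
Proof. by move=> h u i r su ik; apply: (h (a :: u) i.+1) => //=; rewrite su. Qed.

Lemma homog_head k f (r : R) x s : homog k f -> (size s).+1 = k ->
  f (r *: x :: s) = r *: f (x :: s).
Proof. by move=> h ss; apply: (h (x :: s) 0%N) => //; rewrite -ss. Qed.

Lemma homog_set_nth k f t i (r : R) y : homog k f -> size t = k -> (i < k)%N ->
  f (set_nth 0 t i (r *: y)) = r *: f (set_nth 0 t i y).
Proof.
move=> h st ik; have := h (set_nth 0 t i y) i r.
by rewrite nth_set_nth_eq set_set_nth_eq => -> //; rewrite size_set_nth_lt // st.
Qed.

Lemma homog_of_head k f : sym k f ->
  (forall (r : R) x s, (size s).+1 = k -> f (r *: x :: s) = r *: f (x :: s)) ->
  homog k f.
Proof.
move=> hs h u i r su ik; rewrite (sym_set_nth _ hs su ik) h; last first.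
  by rewrite size_drop_at su //; lia.
by congr (_ *: _); apply: esym; apply: hs => //; apply: perm_drop_at; rewrite su.
Qed.

Lemma alt_cons k f a : sym k.+1 f -> alt k.+1 f -> alt k (fun s => f (a :: s)).
Proof.
move=> hs ha b s ss /=.
have p : perm_eq (a :: b :: b :: s) (b :: b :: a :: s).
  by have := perm_catCA [:: a] [:: b; b] s => /permPl.
by rewrite (hs _ _ _ p) ?ha //= ss.
Qed.

Lemma alt_eq_args k f : sym k f -> alt k f -> forall u i j, size u = k ->
  (i < k)%N -> (j < k)%N -> i != j -> u`_i = u`_j -> f u = 0.
Proof.
move=> hs ha.
suff H u i j : size u = k -> (i < j)%N -> (j < k)%N -> u`_i = u`_j -> f u = 0.
  move=> u i j su ik jk; case: ltngtP => // ij _ e; first exact: (H u i j).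
  exact: (H u j i).
move=> su ij jk e.
have p1 : perm_eq u (u`_j :: drop_at j u) by apply: perm_drop_at; rewrite su.
have p2 : perm_eq (drop_at j u) (u`_i :: drop_at i (drop_at j u)).
  have -> : u`_i = (drop_at j u)`_i by rewrite nth_drop_at /bump leqNgt ij.
  by apply: perm_drop_at; rewrite size_drop_at su //; lia.
rewrite (hs u (u`_j :: u`_i :: drop_at i (drop_at j u))) //; last first.
  by apply: perm_trans p1 _; rewrite perm_cons.
by rewrite e; apply: ha; rewrite !size_drop_at ?su //; lia.
Qed.

Lemma altformD k f g : altform k f -> altform k g -> altform k (fun s => f s + g s).
Proof.
move=> [fs fm fa fh] [gs gm ga gh]; split.
- exact: symD.
- by move=> u i x y su ik; rewrite fm // gm // addrACA.
- by move=> a s ss; rewrite fa // ga // addr0.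
- by move=> u i r su ik; rewrite fh // gh // scalerDr.
Qed.

Lemma altform_cons k f a : altform k.+1 f -> altform k (fun s => f (a :: s)).
Proof.
move=> [hs hm ha hh]; split.
- exact: sym_cons.
- exact: multiadd_cons.
- exact: alt_cons.
- exact: homog_cons.
Qed.

End SeqForms.

Section LieRinehart.
Variables (K : fieldType) (A : comAlgType K) (L M : lmodType A).
Variables (br : L -> L -> L) (sq : L -> L) (th : L -> A -> A) (rho : L -> M -> M).
Hypothesis pcharA2 : 2%N \in [pchar A].
Hypothesis brDl : forall x y z, br (x + y) z = br x z + br y z.
Hypothesis brDr : forall x y z, br x (y + z) = br x y + br x z.
Hypothesis brxx : forall x, br x x = 0.
Hypothesis jacobi : forall x y z, br x (br y z) + br y (br z x) + br z (br x y) = 0.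
Hypothesis br_sq : forall x y, br (sq x) y = br x (br x y).
Hypothesis sqD : forall x y, sq (x + y) = sq x + sq y + br x y.
Hypothesis sqZ : forall (a : A) x, sq (a *: x) = (a ^+ 2) *: sq x + th (a *: x) a *: x.
Hypothesis thM : forall x a b, th x (a * b) = a * th x b + th x a * b.
Hypothesis thL : forall (a : A) x y c, th (a *: x + y) c = a * th x c + th y c.
Hypothesis brZr : forall x (a : A) y, br x (a *: y) = a *: br x y + th x a *: y.
Hypothesis rhoDr : forall x m m', rho x (m + m') = rho x m + rho x m'.
Hypothesis rhoL : forall (a : A) x y m, rho (a *: x + y) m = a *: rho x m + rho y m.
Hypothesis rho_br : forall x y m, rho (br x y) m = rho x (rho y m) - rho y (rho x m).
Hypothesis rho_sq : forall x m, rho (sq x) m = rho x (rho x m).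
Hypothesis rhoZr : forall x (a : A) m, rho x (a *: m) = a *: rho x m + th x a *: m.

Implicit Types (x y z : L) (f g : seq L -> M) (s t u v : seq L).

Let addmm (m : M) : m + m = 0. Proof. exact: addvv_pchar2. Qed.

Lemma brC x y : br x y = br y x.
Proof.
apply: (addv_eq0_pchar2 pcharA2).
by have := brxx (x + y); rewrite brDl !brDr !brxx add0r addr0.
Qed.

Lemma brZl (a : A) x y : br (a *: x) y = a *: br x y + th y a *: x.
Proof. by rewrite brC brZr brC. Qed.

Lemma br_leibniz x y z : br (br x y) z = br x (br y z) + br y (br x z).
Proof.
apply: (addv_eq0_pchar2 pcharA2).
by rewrite [br (br x y) z]brC [br x z]brC addrC jacobi.
Qed.

Lemma rho0l m : rho 0 m = 0.
Proof. by apply: idem_addr_eq0; have := rhoL 1 0 0 m; rewrite scaler0 addr0 scale1r. Qed.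

Lemma rho0r x : rho x 0 = 0.
Proof. by apply: idem_addr_eq0; rewrite -rhoDr addr0. Qed.

Lemma rhoDl x y m : rho (x + y) m = rho x m + rho y m.
Proof. by have := rhoL 1 x y m; rewrite !scale1r. Qed.

Lemma rhoZl (a : A) x m : rho (a *: x) m = a *: rho x m.
Proof. by have := rhoL a x 0 m; rewrite addr0 rho0l addr0. Qed.

Lemma rho_brD x y m : rho (br x y) m = rho x (rho y m) + rho y (rho x m).
Proof. by rewrite rho_br oppv_pchar2. Qed.

Lemma rho_sum x I (r : seq I) (P : pred I) (F : I -> M) :
  rho x (\sum_(i <- r | P i) F i) = \sum_(i <- r | P i) rho x (F i).
Proof. exact: (big_morph (rho x) (rhoDr x) (rho0r x)). Qed.

Lemma thZl (a : A) x c : th (a *: x) c = a * th x c.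
Proof.
have th0 : th 0 c = 0.
  by apply: idem_addr_eq0; have := thL 1 0 0 c; rewrite scaler0 addr0 mul1r.
by have := thL a x 0 c; rewrite addr0 th0 addr0.
Qed.

Lemma th_sqr x (a : A) : th x (a ^+ 2) = 0.
Proof. by rewrite expr2 thM mulrC addrr_pchar2. Qed.

Fact lie_key : unit. Proof. by []. Qed.
Definition lie x f t : M := locked_with lie_key
  (rho x (f t) + \sum_(0 <= k < size t) f (set_nth 0 t k (br x t`_k))).

Lemma lieE x f t :
  lie x f t = rho x (f t) + \sum_(0 <= k < size t) f (set_nth 0 t k (br x t`_k)).
Proof. by rewrite /lie unlock. Qed.

(* [dCEs_expand] recovers the Chevalley-Eilenberg formula from this recursion. *)
Fixpoint dCEs u f : M :=
  match u with
  | [::] => 0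
  | x :: t => lie x f t + dCEs t (fun s => f (x :: s))
  end.

Lemma dCEs_cons x t f : dCEs (x :: t) f = lie x f t + dCEs t (fun s => f (x :: s)).
Proof. by []. Qed.

Lemma lie_ext x f g t : (forall s, size s = size t -> f s = g s) -> lie x f t = lie x g t.
Proof.
move=> fg; rewrite !lieE fg //; congr (_ + _); apply: eq_big_nat => k /andP[_ kt].
by rewrite fg // size_set_nth_lt.
Qed.

Lemma lieD x f g t : lie x (fun s => f s + g s) t = lie x f t + lie x g t.
Proof. by rewrite !lieE rhoDr big_split /= addrACA. Qed.

Lemma lie0 x t : lie x (fun _ => 0) t = 0.
Proof. by rewrite !lieE rho0r add0r big1. Qed.

Lemma lie_cons x f y t : lie x f (y :: t) = lie x (fun s => f (y :: s)) t + f (br x y :: t).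
Proof. by rewrite !lieE /= big_nat_recl //= addrAC -!addrA; congr (_ + _). Qed.

Lemma lieDl x y f t : multiadd (size t) f -> lie (x + y) f t = lie x f t + lie y f t.
Proof.
move=> hf; rewrite !lieE rhoDl addrACA -big_split /=; congr (_ + _).
by apply: eq_big_nat => k /andP[_ kt]; rewrite brDl hf.
Qed.

Lemma lieZ x (a : A) g t : lie x (fun s => a *: g s) t = a *: lie x g t + th x a *: g t.
Proof. by rewrite !lieE rhoZr scalerDr scaler_sumr addrAC. Qed.

Lemma lieZl (a : A) x f t : multiadd (size t) f -> homog (size t) f ->
  lie (a *: x) f t =
  a *: lie x f t + \sum_(0 <= k < size t) th t`_k a *: f (set_nth 0 t k x).
Proof.
move=> hm hh; rewrite !lieE rhoZl scalerDr scaler_sumr -addrA -big_split; congr (_ + _).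
by apply: eq_big_nat => k /andP[_ kt] /=; rewrite brZl hm // !(homog_set_nth _ _ hh).
Qed.

Definition lie2_term f t x y (k l : nat) :=
  f (set_nth 0 (set_nth 0 t k (br x t`_k)) l (br y (set_nth 0 t k (br x t`_k))`_l)).

Lemma lie_lie x y f t : lie x (lie y f) t =
  rho x (rho y (f t)) + \sum_(l < size t) rho x (f (set_nth 0 t l (br y t`_l)))
  + \sum_(k < size t) rho y (f (set_nth 0 t k (br x t`_k)))
  + \sum_(k < size t) \sum_(l < size t) lie2_term f t x y k l.
Proof.
rewrite !lieE rhoDr rho_sum !big_mkord -!addrA; congr (_ + (_ + _)).
rewrite -big_split /=; apply: eq_bigr => k _.
by rewrite lieE size_set_nth_lt // big_mkord.
Qed.

Lemma lie_comm x y f t : multiadd (size t) f ->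
  lie x (lie y f) t + lie y (lie x f) t = lie (br x y) f t.
Proof.
move=> hf; rewrite !lie_lie !addrA [LHS](ACl ((1*5)*(2*7)*(3*6)*(4*8))) /=.
rewrite -rho_brD !addmm !addr0.
rewrite !lieE big_mkord sum_transpose_diag //.
  apply: congr1; apply: eq_bigr => k _.
  by rewrite /lie2_term !nth_set_nth_eq !set_set_nth_eq -hf // br_leibniz addrC.
move=> k l kt lt kl; rewrite /lie2_term nth_set_nth_neq 1?eq_sym // nth_set_nth_neq //.
by rewrite set_set_nth_neq.
Qed.

Lemma lie_sq x f t : multiadd (size t) f -> lie x (lie x f) t = lie (sq x) f t.
Proof.
move=> hf; rewrite lie_lie -(addrA (rho _ _)) addmm addr0 -rho_sq lieE big_mkord.
congr (_ + _); rewrite sum_sym_diag //.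
  by apply: eq_bigr => k _; rewrite /lie2_term !nth_set_nth_eq !set_set_nth_eq br_sq.
move=> k l kt lt; case: (eqVneq k l) => [-> //|kl].
rewrite /lie2_term nth_set_nth_neq 1?eq_sym // nth_set_nth_neq //.
by rewrite set_set_nth_neq.
Qed.

Lemma dCEs_ext u f g : (forall s, (size s).+1 = size u -> f s = g s) -> dCEs u f = dCEs u g.
Proof.
elim: u f g => [//|x t IH] f g fg /=; congr (_ + _).
  by apply: lie_ext => s st; apply: fg; rewrite st.
by apply: IH => s st; apply: fg; rewrite /= st.
Qed.

Lemma dCEsD u f g : dCEs u (fun s => f s + g s) = dCEs u f + dCEs u g.
Proof.
elim: u f g => [|x t IH] f g /=; first by rewrite addr0.
by rewrite lieD (IH (fun s => f (x :: s)) (fun s => g (x :: s))) addrACA.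
Qed.

Lemma dCEs0 u : dCEs u (fun _ => 0) = 0.
Proof. by apply: idem_addr_eq0; rewrite -dCEsD; apply: dCEs_ext => s _; rewrite addr0. Qed.

Lemma dCEsZ (a : A) g t :
  dCEs t (fun s => a *: g s) = a *: dCEs t g + \sum_(0 <= p < size t) th t`_p a *: g (drop_at p t).
Proof.
elim: t g => [|x t IH] g /=; first by rewrite scaler0 big_geq // addr0.
by rewrite lieZ (IH (fun s => g (x :: s))) big_nat_recl // [in RHS]scalerDr addrACA drop_at0.
Qed.

Lemma lie_dCEs u x f : multiadd (size u).-1 f ->
  lie x (fun s => dCEs s f) u = dCEs u (lie x f).
Proof.
elim: u f => [|y t IH] f hf; first by rewrite !lieE /= big_geq // addr0 rho0r.
rewrite lie_cons dCEs_cons.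
rewrite (@lie_ext _ _ (fun s => lie y f s + dCEs s (fun v => f (y :: v)))) //.
rewrite lieD IH; last exact: multiadd_consP.
rewrite dCEs_cons (@dCEs_ext t (fun s => lie x f (y :: s))
  (fun s => lie x (fun v => f (y :: v)) s + f (br x y :: s))); last first.
  by move=> s _; rewrite lie_cons.
rewrite dCEsD -lie_comm //.
by rewrite !addrA [LHS](ACl ((1*3)*4*2*5)) /= addmm add0r.
Qed.

Lemma dCEs_dCEs u f : multiadd (size u).-2 f -> dCEs u (fun s => dCEs s f) = 0.
Proof.
elim: u f => [//|x t IH] f hf.
rewrite dCEs_cons lie_dCEs; last by case: t hf IH.
rewrite (@dCEs_ext t (fun s => dCEs (x :: s) f)
  (fun s => lie x f s + dCEs s (fun v => f (x :: v)))) //.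
rewrite dCEsD IH ?addr0 ?addmm //.
by case: t hf IH => [|y t] //= hf _; apply: multiadd_consP.
Qed.

Lemma sym_lie k x f : sym k f -> sym k (lie x f).
Proof.
elim: k f => [|k IH] f hs; first exact: sym0.
apply: sym_head => [a b s ss|a].
  rewrite !lie_cons.
  rewrite (@lie_ext x (fun s => f (a :: b :: s)) (fun s => f (b :: a :: s))); last first.
    by move=> v sv; apply: (sym_swap_head _ _ hs); rewrite sv.
  rewrite (sym_swap_head _ (br x b) hs) ?(sym_swap_head _ (br x a) hs) //.
  by rewrite -addrA [X in _ + X]addrC addrA.
apply: (@sym_ext _ _ _ _ _ (fun s => lie x (fun v => f (a :: v)) s + f (br x a :: s))).
  by move=> s; rewrite lie_cons.
by apply: symD; [apply: IH; apply: sym_cons | apply: sym_cons].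
Qed.

Lemma sym_dCEs k f : sym k f -> sym k.+1 (fun u => dCEs u f).
Proof.
elim: k f => [|k IH] f hs.
  by apply: sym_head => [a b s //|a]; exact: sym0.
apply: sym_head => [a b s ss|a].
  rewrite !dCEs_cons !lie_cons.
  rewrite (@dCEs_ext s (fun v => f (a :: b :: v)) (fun v => f (b :: a :: v))); last first.
    by move=> v sv; apply: (sym_swap_head _ _ hs); case: ss => <-; rewrite -sv.
  by rewrite brC addrACA [in RHS]addrACA [lie a _ _ + _]addrC.
apply: (@sym_ext _ _ _ _ _ (fun s => lie a f s + dCEs s (fun v => f (a :: v)))) => //.
by apply: symD; [apply: sym_lie | apply: IH; apply: sym_cons].
Qed.

Lemma alt_lie k x f : sym k f -> alt k f -> alt k (lie x f).
Proof.
move=> hs ha a s ss; rewrite !lie_cons.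
rewrite (@lie_ext x _ (fun _ => 0)); last by move=> v sv; apply: ha; rewrite /= sv.
by rewrite lie0 add0r (sym_swap_head _ _ hs) ?addmm.
Qed.

Lemma alt_dCEs k f : sym k f -> multiadd k f -> alt k f -> alt k.+1 (fun u => dCEs u f).
Proof.
move=> hs hm ha a s ss; rewrite !dCEs_cons lie_cons brxx (multiadd_head0 hm); last by case: ss.
rewrite (@dCEs_ext s _ (fun _ => 0)); last by move=> v sv; apply: ha; rewrite /= sv; case: ss.
by rewrite dCEs0 !addr0 addmm.
Qed.

Lemma multiadd_lie k x f : sym k f -> multiadd k f -> multiadd k (lie x f).
Proof.
move=> hs hm; apply: multiadd_of_head => [|y z s ss]; first exact: sym_lie.
rewrite !lie_cons brDr (multiadd_head _ _ hm ss).
rewrite (@lie_ext x _ (fun v => f (y :: v) + f (z :: v))); last first.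
  by move=> v sv; apply: (multiadd_head _ _ hm); rewrite sv.
by rewrite lieD addrACA.
Qed.

Lemma multiadd_dCEs k f : sym k f -> multiadd k f -> multiadd k.+1 (fun u => dCEs u f).
Proof.
move=> hs hm; apply: multiadd_of_head => [|y z s ss]; first exact: sym_dCEs.
case: ss => ss; rewrite !dCEs_cons lieDl ?ss //.
rewrite (@dCEs_ext s _ (fun v => f (y :: v) + f (z :: v))); last first.
  by move=> v sv; apply: (multiadd_head _ _ hm); rewrite sv.
by rewrite dCEsD addrACA.
Qed.

Lemma homog_lie k x f : sym k f -> multiadd k f -> homog k f -> homog k (lie x f).
Proof.
move=> hs hm hh; apply: homog_of_head => [|a y s ss]; first exact: sym_lie.
rewrite !lie_cons brZr (multiadd_head _ _ hm ss) !(homog_head _ _ hh ss).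
rewrite (@lie_ext x _ (fun v => a *: f (y :: v))); last first.
  by move=> v sv; apply: (homog_head _ _ hh); rewrite sv.
by rewrite lieZ addrACA addmm addr0 scalerDr.
Qed.

(* The terms produced by the Leibniz rule on both sides cancel in pairs. *)
Lemma homog_dCEs k f : sym k f -> multiadd k f -> homog k f -> homog k.+1 (fun u => dCEs u f).
Proof.
move=> hs hm hh; apply: homog_of_head => [|a y s ss]; first exact: sym_dCEs.
case: ss => ss; rewrite !dCEs_cons lieZl ?ss //.
rewrite (@dCEs_ext s _ (fun v => a *: f (y :: v))); last first.
  by move=> v sv; apply: (homog_head _ _ hh); rewrite sv.
rewrite dCEsZ addrACA scalerDr.
suff -> : \sum_(0 <= i < k) th s`_i a *: f (set_nth 0 s i y) =
          \sum_(0 <= p < size s) th s`_p a *: f (y :: drop_at p s).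
  by rewrite addmm addr0.
by rewrite -ss; apply: eq_big_nat => p /andP[_ ps]; rewrite (sym_set_nth _ hs ss) // -ss.
Qed.

Lemma altform_lie k x f : altform k f -> altform k (lie x f).
Proof.
move=> [hs hm ha hh]; split.
- exact: sym_lie.
- exact: multiadd_lie.
- exact: alt_lie.
- exact: homog_lie.
Qed.

Lemma altform_dCEs k f : altform k f -> altform k.+1 (fun u => dCEs u f).
Proof.
move=> [hs hm ha hh]; split.
- exact: sym_dCEs.
- exact: multiadd_dCEs.
- exact: alt_dCEs.
- exact: homog_dCEs.
Qed.

(* [delta] on lists: [f] and [g] play the roles of [phi] and [om x], and [x] is
   the distinguished first argument. *)
Definition deltas f g x t : M := lie x (fun s => f (x :: s)) t + f (sq x :: t) + dCEs t g.

Lemma deltas_ext f f' g g' x t :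
  (forall s, size s = (size t).+1 -> f s = f' s) ->
  (forall s, (size s).+1 = size t -> g s = g' s) ->
  deltas f g x t = deltas f' g' x t.
Proof.
move=> ef eg; rewrite /deltas ef // (dCEs_ext eg).
by rewrite (@lie_ext x _ (fun s => f' (x :: s))) // => s st; rewrite ef //= st.
Qed.

Lemma altform_deltas k f g x : altform k.+2 f -> altform k g -> altform k.+1 (deltas f g x).
Proof.
move=> hf hg; apply: altformD; last exact: altform_dCEs.
by apply: altformD; [apply: altform_lie; apply: altform_cons | apply: altform_cons].
Qed.

Lemma deltas_deltas t x f g : multiadd (size t) f -> multiadd (size t).-2 g ->
  deltas (fun s => dCEs s f) (deltas f g x) x t = 0.
Proof.
move=> hf hg; rewrite /deltas.
rewrite (@lie_ext _ _ (fun s => lie x f s + dCEs s (fun v => f (x :: v)))) //.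
rewrite lieD lie_dCEs; last exact: multiadd_consP.
rewrite lie_sq // dCEs_cons !dCEsD dCEs_dCEs // addr0.
by rewrite (addrACA (lie (sq x) f t)) addmm add0r addmm.
Qed.

Lemma deltasDx k f g gx gy x y t : sym k.+1 f -> multiadd k.+1 f -> size t = k ->
  (forall s, (size s).+1 = k -> g s = gx s + gy s + f (x :: y :: s)) ->
  deltas f g (x + y) t = deltas f gx x t + deltas f gy y t + dCEs (x :: y :: t) f.
Proof.
move=> hs hm st hg; rewrite /deltas.
rewrite (@lie_ext (x + y) _ (fun s => f (x :: s) + f (y :: s))); last first.
  by move=> s ss; apply: (multiadd_head _ _ hm); rewrite ss st.
have hmx : multiadd (size t) (fun s => f (x :: s)) by rewrite st; apply: multiadd_cons.
have hmy : multiadd (size t) (fun s => f (y :: s)) by rewrite st; apply: multiadd_cons.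
rewrite lieD !lieDl // sqD !(multiadd_head _ _ hm) ?st //.
rewrite (@dCEs_ext t _ (fun s => gx s + gy s + f (x :: y :: s))); last first.
  by move=> s ss; apply: hg; rewrite ss st.
rewrite !dCEsD !dCEs_cons lie_cons.
by rewrite !addrA [LHS](ACl (1*5*8*4*6*9*3*7*2*10)).
Qed.

Lemma deltasZx k f g g' (a : A) x t : altform k.+1 f -> size t = k ->
  (forall s, (size s).+1 = k -> g' s = (a ^+ 2) *: g s) ->
  deltas f g' (a *: x) t = (a ^+ 2) *: deltas f g x t.
Proof.
move=> [hs hm ha hh] st hg; rewrite /deltas.
rewrite (@lie_ext (a *: x) _ (fun s => a *: f (x :: s))); last first.
  by move=> s ss; apply: (homog_head _ _ hh); rewrite ss st.
rewrite lieZ lieZl; first last.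
- by rewrite st; apply: homog_cons.
- by rewrite st; apply: multiadd_cons.
have -> : \sum_(0 <= i < size t) th t`_i a *: f (x :: set_nth 0 t i x) = 0.
  rewrite big_nat_cond big1 // => i /andP[/andP[_ it] _].
  rewrite (@alt_eq_args _ _ _ _ _ hs ha (x :: set_nth 0 t i x) 0 i.+1) ?scaler0 //=.
  - by rewrite size_set_nth_lt // st.
  - by rewrite -st.
  - by rewrite nth_set_nth_eq.
rewrite addr0 sqZ (multiadd_head _ _ hm) ?st // !(homog_head _ _ hh) ?st //.
rewrite (@dCEs_ext t _ (fun s => (a ^+ 2) *: g s)); last by move=> s ss; rewrite hg // ss st.
rewrite dCEsZ.
have -> : \sum_(0 <= p < size t) th t`_p (a ^+ 2) *: g (drop_at p t) = 0.
  by rewrite big1 // => p _; rewrite th_sqr scale0r.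
rewrite addr0 scalerA -expr2 thZl -scalerA !scalerDr.
by rewrite !addrA [LHS](ACl (2*4*1*3*5)) /= addmm add0r.
Qed.

Lemma dCEs_expand u f : sym (size u).-1 f -> dCEs u f =
  \sum_(0 <= q < size u) \sum_(0 <= p < q) f (br u`_p u`_q :: drop_at p (drop_at q u))
  + \sum_(0 <= p < size u) rho u`_p (f (drop_at p u)).
Proof.
elim: u f => [|a t IH] f hs; first by rewrite /= !big_geq // addr0.
rewrite dCEs_cons IH; last exact: sym_consP.
rewrite /= [in RHS]big_nat_recl // (@big_geq _ _ _ 0 0) // add0r [in RHS]big_nat_recl //.
rewrite drop_at0.
have E i : (0 <= i < size t)%N ->
  \sum_(0 <= p < i.+1) f (br (a :: t)`_p (a :: t)`_i.+1 :: drop_at p (drop_at i.+1 (a :: t))) =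
  f (set_nth 0 t i (br a t`_i)) +
  \sum_(0 <= p < i) f (a :: br t`_p t`_i :: drop_at p (drop_at i t)).
  move=> /andP[_ it]; rewrite big_nat_recl //= drop_atS drop_at0 (sym_set_nth _ hs) //.
  congr (_ + _); apply: eq_big_nat => p /andP[_ pi] /=; rewrite drop_atS.
  apply: (sym_swap_head _ _ hs).
  have h1 : size (drop_at i t) = (size t).-1 := size_drop_at it.
  have h2 : size (drop_at p (drop_at i t)) = (size (drop_at i t)).-1.
    by apply: size_drop_at; rewrite h1; lia.
  by rewrite h2 h1 /=; lia.
rewrite (eq_big_nat _ _ E) big_split /= lieE.
by rewrite !addrA [LHS](ACl (2*3*1*4)) /=.
Qed.

Lemma swap_alternating m (F : ('I_m -> L) -> M) (w : 'I_m -> L) i j y z :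
  alternating F -> multiadditive F -> i != j ->
  F (upd (upd w i y) j z) = F (upd (upd w i z) j y).
Proof.
move=> ha hm ij.
pose G y z := F (upd (upd w i y) j z).
have GDr p q q' : G p (q + q') = G p q + G p q' by rewrite /G hm.
have GDl p p' q : G (p + p') q = G p q + G p' q by rewrite /G !(upd_comm _ _ _ ij) hm.
have Gxx p : G p p = 0.
  by apply: (ha _ i j ij); rewrite /upd !eqxx; case: (i == j).
have := Gxx (y + z); rewrite GDl !GDr !Gxx add0r addr0.
exact: addv_eq0_pchar2.
Qed.

Lemma altform_on_seq m (F : ('I_m -> L) -> M) :
  alternating F -> multiadditive F ->
  (forall w i (a : A), F (upd w i (a *: w i)) = a *: F w) -> altform m (on_seq F).
Proof.
move=> ha hm hh; split.
- apply: sym_adjacent => s i ss im.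
  have i0 : (i < m)%N by apply: ltnW.
  rewrite /on_seq /swap_at (fam_set_nth _ im) (fam_set_nth _ i0).
  have E : fam m s = upd (upd (fam m s) (Ordinal i0) s`_i) (Ordinal im) s`_i.+1.
    by rewrite -[s`_i]/(fam m s (Ordinal i0)) upd_id -[s`_i.+1]/(fam m s (Ordinal im)) upd_id.
  rewrite [in RHS]E swap_alternating //.
  by apply/negP => /eqP [] e; lia.
- by move=> u i x y su im; rewrite /on_seq !(fam_set_nth _ im) hm.
- move=> a s ss.
  have h0 : (0 < m)%N by rewrite -ss.
  have h1 : (1 < m)%N by rewrite -ss.
  exact: (ha _ (Ordinal h0) (Ordinal h1)).
- by move=> u i a su im; rewrite /on_seq (fam_set_nth _ im); apply: (hh _ (Ordinal im)).
Qed.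

Lemma dCE_seq_of m (phi : ('I_m.+1 -> L) -> M) (w : 'I_m.+2 -> L) :
  sym m.+1 (on_seq phi) -> dCE br rho phi w = dCEs (seq_of w) (on_seq phi).
Proof.
move=> hs; move: (seq_of w) (size_seq_of w) (fam_seq_of w) => u su <-.
rewrite dCEs_expand ?su // /dCE /on_seq; congr (_ + _).
  rewrite big_mkord; apply: eq_bigr => j _.
  rewrite (@big_nat_ord_lt _ j m.+1); last by rewrite -ltnS.
  by apply: eq_bigr => i ij; rewrite !delp_fam vcons_fam.
by rewrite big_mkord; apply: eq_bigr => i _; rewrite delp_fam.
Qed.

Lemma delta_seq_of n (phi : ('I_n.+2 -> L) -> M) (om : L -> ('I_n -> L) -> M) x
    (w : 'I_n.+1 -> L) :
  sym n.+2 (on_seq phi) -> sym n (on_seq (om x)) ->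
  delta br sq rho phi om x w = deltas (on_seq phi) (on_seq (om x)) x (seq_of w).
Proof.
move=> hs ho; move: (seq_of w) (size_seq_of w) (fam_seq_of w) => u su <-.
rewrite /delta /deltas dCEs_expand ?su // lieE su /on_seq.
have E4 : \sum_(i < n.+1) phi (vcons (m := n.+2) (br x (fam n.+1 u i))
               (vcons (m := n.+1) x (delp i (fam n.+1 u)))) =
          \sum_(0 <= k < n.+1) phi (fam n.+2 (x :: set_nth 0 u k (br x u`_k))).
  rewrite big_mkord; apply: eq_bigr => i _.
  rewrite delp_fam !vcons_fam; apply: hs; first by rewrite /= size_drop_at su.
  apply: perm_trans (perm_swap_head _ _ _) _; rewrite perm_cons perm_sym.
  by apply: perm_set_nth; rewrite su.
have E5 : \sum_(j < n.+1) \sum_(i < n.+1 | (i < j)%N)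
      om x (vcons (m := n) (br (fam n.+1 u i) (fam n.+1 u j)) (delp i (delp j (fam n.+1 u)))) =
    \sum_(0 <= q < n.+1) \sum_(0 <= p < q) om x (fam n (br u`_p u`_q :: drop_at p (drop_at q u))).
  rewrite big_mkord; apply: eq_bigr => j _.
  rewrite (@big_nat_ord_lt _ j n.+1); last exact: ltnW.
  by apply: eq_bigr => i ij; rewrite !delp_fam vcons_fam.
have E2 : \sum_(i < n.+1) rho (fam n.+1 u i) (om x (delp i (fam n.+1 u))) =
          \sum_(0 <= p < n.+1) rho u`_p (om x (fam n (drop_at p u))).
  by rewrite big_mkord; apply: eq_bigr => i _; rewrite delp_fam.
rewrite E4 E5 E2 !vcons_fam.
by rewrite !addrA [LHS](ACl (1*4*3*5*2)) /=.
Qed.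

Lemma A_multilinear_updZ m (F : ('I_m -> L) -> M) w i (a : A) :
  A_multilinear F -> F (upd w i (a *: w i)) = a *: F w.
Proof. by case=> _ hh; rewrite hh upd_id. Qed.

Lemma K_multilinear_of_A m (F : ('I_m -> L) -> M) : A_multilinear F -> K_multilinear F.
Proof. by case=> hm hh; split=> // w i k y; apply: hh. Qed.

Lemma alternating_seq_of m f :
  sym m f -> alt m f -> alternating (fun w : 'I_m -> L => f (seq_of w)).
Proof.
move=> hs ha w i j ij e.
by apply: (alt_eq_args hs ha (i := i) (j := j)); rewrite ?size_seq_of ?nth_seq_of.
Qed.

Lemma A_multilinear_seq_of m f :
  multiadd m f -> homog m f -> A_multilinear (fun w : 'I_m -> L => f (seq_of w)).
Proof.
move=> hm hh; split=> [w i y y'|w i a y]; rewrite !seq_of_upd.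
  by rewrite hm ?size_seq_of.
by rewrite (homog_set_nth _ _ hh) ?size_seq_of.
Qed.

Lemma on_seq_dCE m (phi : ('I_m.+1 -> L) -> M) : altform m.+1 (on_seq phi) ->
  forall s, size s = m.+2 -> on_seq (dCE br rho phi) s = dCEs s (on_seq phi).
Proof. by case=> hs _ _ _ s ss; rewrite /on_seq dCE_seq_of // seq_of_fam. Qed.

Lemma on_seq_delta n (phi : ('I_n.+2 -> L) -> M) (om : L -> ('I_n -> L) -> M) x :
  altform n.+2 (on_seq phi) -> altform n (on_seq (om x)) ->
  forall s, size s = n.+1 ->
  on_seq (delta br sq rho phi om x) s = deltas (on_seq phi) (on_seq (om x)) x s.
Proof. by case=> hs _ _ _ [ho _ _ _] s ss; rewrite /on_seq delta_seq_of // seq_of_fam. Qed.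

Lemma dCE_dCE m (phi : ('I_m.+1 -> L) -> M) (w : 'I_m.+3 -> L) :
  alternating phi -> A_multilinear phi -> dCE br rho (dCE br rho phi) w = 0.
Proof.
move=> ha hm; have Fphi := altform_on_seq ha hm.1 (fun w i a => A_multilinear_updZ w i a hm).
have [Ds _ _ _] := altform_dCEs Fphi.
rewrite dCE_seq_of; last exact: sym_ext_size (on_seq_dCE Fphi) Ds.
rewrite (@dCEs_ext _ _ (fun s => dCEs s (on_seq phi))); last first.
  by move=> s; rewrite size_seq_of => -[ss]; apply: on_seq_dCE.
by apply: dCEs_dCEs; rewrite size_seq_of; case: Fphi.
Qed.

Lemma altform_cochain n (phi : ('I_n.+2 -> L) -> M) (om : L -> ('I_n -> L) -> M) :
  is_cochain phi om -> altform n.+2 (on_seq phi) /\ forall x, altform n (on_seq (om x)).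
Proof.
case=> pha [phm [oma [omk [_ [_ [_ omH]]]]]]; split.
  exact: altform_on_seq pha phm.1 (fun w i a => A_multilinear_updZ w i a phm).
by move=> x; apply: altform_on_seq; [exact: oma | exact: (omk x).1 | exact: omH].
Qed.

Lemma cochain_dCE n (phi : ('I_n.+2 -> L) -> M) (om : L -> ('I_n -> L) -> M) :
  is_cochain phi om -> is_cochain (dCE br rho phi) (delta br sq rho phi om).
Proof.
move=> hc; have [Fphi Fom] := altform_cochain hc.
case: hc => _ [_ [_ [_ [_ [omD [omZ _]]]]]].
have [[Ps Pm _ _] [Ds Dm Da Dh]] := (Fphi, altform_dCEs Fphi).
have Fdeltas x := altform_deltas x Fphi (Fom x).
have -> : dCE br rho phi = fun w => dCEs (seq_of w) (on_seq phi).
  by apply: functional_extensionality => w; apply: dCE_seq_of.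
have -> : delta br sq rho phi om =
          fun x w => deltas (on_seq phi) (on_seq (om x)) x (seq_of w).
  apply: functional_extensionality => x; apply: functional_extensionality => w.
  by apply: delta_seq_of => //; case: (Fom x).
have deltasZ (a : A) x (w : 'I_n.+1 -> L) :
    deltas (on_seq phi) (on_seq (om (a *: x))) (a *: x) (seq_of w) =
    (a ^+ 2) *: deltas (on_seq phi) (on_seq (om x)) x (seq_of w).
  apply: deltasZx Fphi _ _; first by rewrite size_seq_of.
  by move=> s _; rewrite /on_seq omZ.
split; first exact: alternating_seq_of Ds Da.
split; first exact: A_multilinear_seq_of Dm Dh.
split; first by move=> x; case: (Fdeltas x) => hs _ ha _; apply: alternating_seq_of hs ha.
split.
  move=> x; case: (Fdeltas x) => _ hm _ hh.
  exact/K_multilinear_of_A/(A_multilinear_seq_of hm hh).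
split; first by move=> k x w; rewrite (_ : (k ^+ 2)%:A = k%:A ^+ 2) ?deltasZ // exprZn expr1n.
split.
  move=> x y w; rewrite !seq_of_vcons; apply: (deltasDx Ps Pm); first by rewrite size_seq_of.
  by move=> s _; rewrite /on_seq omD !vcons_fam.
split=> // x w i a; rewrite seq_of_upd -nth_seq_of.
by case: (Fdeltas x) => _ _ _ hh; rewrite hh ?size_seq_of.
Qed.

Lemma delta_delta n (phi : ('I_n.+2 -> L) -> M) (om : L -> ('I_n -> L) -> M) x w :
  is_cochain phi om -> delta br sq rho (dCE br rho phi) (delta br sq rho phi om) x w = 0.
Proof.
move/altform_cochain => [Fphi /(_ x) Fom].
have [Ds _ _ _] := altform_dCEs Fphi.
have [Rs _ _ _] := altform_deltas x Fphi Fom.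
rewrite delta_seq_of; last first.
- exact: sym_ext_size (on_seq_delta Fphi Fom) Rs.
- exact: sym_ext_size (on_seq_dCE Fphi) Ds.
rewrite (@deltas_ext _ (fun s => dCEs s (on_seq phi)) _ (deltas (on_seq phi) (on_seq (om x)) x)).
- by apply: deltas_deltas; rewrite size_seq_of; [case: Fphi | case: Fom].
- by move=> s; rewrite size_seq_of => ss; apply: on_seq_dCE.
- by move=> s; rewrite size_seq_of => -[ss]; apply: on_seq_delta.
Qed.

End LieRinehart.

Theorem mainTheorem5 (K : fieldType) (A : comAlgType K) (L M : lmodType A)
  (br : L -> L -> L) (sq : L -> L) (th : L -> A -> A) (rho : L -> M -> M)
  (n : nat) (phi : ('I_n.+2 -> L) -> M) (om : L -> ('I_n -> L) -> M) :
  2%N \in [pchar K] ->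
  is_rLR_algebra br sq th ->
  is_rLR_module br sq th rho ->
  is_cochain phi om ->
  is_cochain (dCE br rho phi) (delta br sq rho phi om) /\
  (forall x, dCE br rho (dCE br rho phi) x = 0) /\
  (forall x z, delta br sq rho (dCE br rho phi) (delta br sq rho phi om) x z = 0).
Proof.
move=> pcharK2 halg hmod hc.
have pcharA2 : 2%N \in [pchar A] by rewrite pchar_lalg.
case: halg => brDl [brDr [_ [_ [brxx [jacobi [_ [br_sq [sqD [_ [_ [thM [thL
  [_ [_ [brZr sqZ]]]]]]]]]]]]]]].
case: hmod => rhoDr [_ [rhoL [rho_br [rho_sq rhoZr]]]].
split; first exact: cochain_dCE.
split=> [x | x z]; last exact: delta_delta.
by case: hc => pha [phm _]; apply: dCE_dCE.
Qed.
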